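(* Suppose $(\mathcal W,\mathcal W,\mu)$ is a reduced system of the FTvN system $(\mathcal V,\mathcal W,\lambda)$, with $\mathcal W$ finite dimensional. Let $F:=\operatorname{ran}\lambda$ and let $F^*=\{w\in\mathcal W:\langle w,f\rangle\ge0\ \forall f\in F\}$ be its dual cone in $\mathcal W$. Then: (a) If $u,v\in F$ and $u-v\in F^*$, then $v\prec u$ in $\mathcal W$. (b) For all $x_1,\dots,x_k\in\mathcal V$, $\lambda(x_1+\cdots+x_k)\prec\lambda(x_1)+\cdots+\lambda(x_k)$ in $\mathcal W$. (c) $x\prec y$ in $\mathcal V$ implies $\lambda(x)\prec\lambda(y)$ in $\mathcal W$; the converse holds if $\mathcal V$ is finite dimensional.
   Context: A Fan-Theobald-von Neumann (FTvN) system is a triple $(\mathcal V,\mathcal W,\lambda)$ where $\mathcal V,\mathcal W$ are real inner product spaces and $\lambda:\mathcal V\to\mathcal W$ is a map such that: (A1) $\|\lambda(x)\|=\|x\|$ for all $x$; (A2) $\langle x,y\rangle\le\langle\lambda(x),\lambda(y)\rangle$ for all $x,y$; (A3) for every $c\in\mathcal V$ and $q\in\lambda(\mathcal V)$ there exists $x$ with $\lambda(x)=q$ and $\langle c,x\rangle=\langle\lambda(c),\lambda(x)\rangle$. A FTvN system $(\mathcal W,\mathcal W,\mu)$ is a reduced system of $(\mathcal V,\mathcal W,\lambda)$ if (C1) $\mu\circ\lambda=\lambda$ and (C2) $\operatorname{ran}\mu\subseteq\operatorname{ran}\lambda$. Majorization in $\mathcal V$: $x\prec y$ iff $x\in\operatorname{conv}\{z\in\mathcal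 V:\lambda(z)=\lambda(y)\}$. Majorization in $\mathcal W$ (with respect to $\mu$): $v\prec u$ iff $v\in\operatorname{conv}\{w\in\mathcal W:\mu(w)=\mu(u)\}$. *)

From HB Require Import structures.
From mathcomp Require Import all_boot all_order all_algebra.
From mathcomp Require Import reals.
Set Implicit Arguments. Unset Strict Implicit. Unset Printing Implicit Defensive.
Import Order.TTheory GRing.Theory Num.Theory.
Local Open Scope ring_scope.

Section Defs.
Variable R : realType.

Definition is_inner_product (V : lmodType R) (ip : V -> V -> R) : Prop :=
  [/\ (forall x y, ip x y = ip y x),
      (forall a x y z, ip (a *: x + y) z = a * ip x z + ip y z),
      (forall x, 0 <= ip x x) &
      (forall x, ip x x = 0 -> x = 0)].

Definition ipnorm (V : lmodType R) (ip : V -> V -> R) (x : V) : R :=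
  Num.sqrt (ip x x).

Definition finite_dim (V : lmodType R) : Prop :=
  exists (n : nat) (e : 'I_n -> V),
    forall x : V, exists c : 'I_n -> R, x = \sum_(i < n) c i *: e i.

Definition conv (V : lmodType R) (S : V -> Prop) : V -> Prop :=
  fun x => exists (n : nat) (a : 'I_n -> R) (z : 'I_n -> V),
    [/\ (forall i, 0 <= a i), \sum_(i < n) a i = 1,
        (forall i, S (z i)) & x = \sum_(i < n) a i *: z i].

Definition FTvN (V W : lmodType R) (ipV : V -> V -> R) (ipW : W -> W -> R)
    (lam : V -> W) : Prop :=
  [/\ is_inner_product ipV, is_inner_product ipW,
      (forall x, ipnorm ipW (lam x) = ipnorm ipV x),                (* A1 *)
      (forall x y, ipV x y <= ipW (lam x) (lam y)) &                (* A2 *)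
      (forall (c : V) (q : W), (exists z, lam z = q) ->
         exists x, lam x = q /\ ipV c x = ipW (lam c) (lam x))].    (* A3 *)

Definition reduced_system (V W : lmodType R) (ipV : V -> V -> R)
    (ipW : W -> W -> R) (lam : V -> W) (mu : W -> W) : Prop :=
  [/\ FTvN ipV ipW lam, FTvN ipW ipW mu,
      (forall x, mu (lam x) = lam x) &                               (* C1 *)
      (forall w, exists x, mu w = lam x)].                           (* C2 *)

Definition majV (V W : lmodType R) (lam : V -> W) (x y : V) : Prop :=
  conv (fun z => lam z = lam y) x.

Definition majW (W : lmodType R) (mu : W -> W) (v u : W) : Prop :=
  conv (fun w => mu w = mu u) v.

End Defs.

From HB Require Import structures.
From mathcomp Require Import all_boot all_order all_algebra.
From mathcomp Require Import reals lra.
From mathcomp Require Import classical_sets boolp topology normedtype derive.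
From mathcomp Require Import matrix_topology matrix_normedtype.
Import Order.TTheory GRing.Theory Num.Theory.
Import numFieldTopology.Exports numFieldNormedType.Exports.
Set Implicit Arguments. Unset Strict Implicit. Unset Printing Implicit Defensive.
Local Open Scope ring_scope.

(* Everything rests on a separation principle.  If [g] preserves norms and
   increases inner products on a finite-dimensional space, then the fibre
   [S = g^-1 (g y)] is bounded and closed, so by Caratheodory [conv S] is a
   continuous image of a compact set and contains a point [p] nearest to [x].
   The variational inequality [<x - p, z - p> <= 0] for [z] in [S], tested on
   a [z] with [<x - p, x> <= <x - p, z>], forces [x = p].  By A3 such a [z]
   exists whenever [<c, x> <= <g c, g y>] for all [c], and this inequality is
   what (a), (b) and (c) verify, using A2, A3, (C1) and (C2). *)

Section InnerProduct.
Variables (R : realType) (E : lmodType R) (ip : E -> E -> R).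
Hypothesis hip : is_inner_product ip.

Lemma ipC x y : ip x y = ip y x. Proof. by case: hip. Qed.

Lemma ipxx_ge0 x : 0 <= ip x x. Proof. by case: hip. Qed.

Lemma ipxx_le0 x : ip x x <= 0 -> x = 0.
Proof. by case: hip => _ _ _ ip_eq0 le0; apply/ip_eq0/le_anti; rewrite le0 ipxx_ge0. Qed.

Lemma ipDl x y z : ip (x + y) z = ip x z + ip y z.
Proof. by case: hip => _ lin _ _; have := lin 1 x y z; rewrite scale1r mul1r. Qed.

Lemma ip0l z : ip 0 z = 0.
Proof. by apply: (addrI (ip 0 z)); rewrite -ipDl !addr0. Qed.

Lemma ipZl a x z : ip (a *: x) z = a * ip x z.
Proof. by case: hip => _ lin _ _; rewrite -[a *: x]addr0 lin ip0l addr0. Qed.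

Lemma ipNl x z : ip (- x) z = - ip x z.
Proof. by rewrite -scaleN1r ipZl mulN1r. Qed.

Lemma ipBl x y z : ip (x - y) z = ip x z - ip y z.
Proof. by rewrite ipDl ipNl. Qed.

Lemma ipDr x y z : ip z (x + y) = ip z x + ip z y.
Proof. by rewrite ipC ipDl !(ipC z). Qed.

Lemma ip0r z : ip z 0 = 0. Proof. by rewrite ipC ip0l. Qed.

Lemma ipZr a x z : ip z (a *: x) = a * ip z x.
Proof. by rewrite ipC ipZl ipC. Qed.

Lemma ipBr x y z : ip z (x - y) = ip z x - ip z y.
Proof. by rewrite ipC ipBl !(ipC z). Qed.

Lemma ip_suml I (r : seq I) (P : pred I) (F : I -> E) z :
  ip (\sum_(i <- r | P i) F i) z = \sum_(i <- r | P i) ip (F i) z.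
Proof. exact: (big_morph (ip^~ z) (fun x y => ipDl x y z) (ip0l z)). Qed.

Lemma ip_sumr I (r : seq I) (P : pred I) (F : I -> E) z :
  ip z (\sum_(i <- r | P i) F i) = \sum_(i <- r | P i) ip z (F i).
Proof. exact: (big_morph (ip z) (fun x y => ipDr x y z) (ip0r z)). Qed.

Lemma normr_ip_le x y : `|ip x y| <= (ip x x + ip y y) / 2.
Proof.
have := ipxx_ge0 (x - y); have := ipxx_ge0 (x + y).
rewrite !(ipBl, ipBr) !(ipDl, ipDr) (ipC y x) ler_norml => h1 h2.
by apply/andP; split; lra.
Qed.

Lemma ip_conv_le (S : E -> Prop) c m x :
  conv S x -> (forall z, S z -> ip c z <= m) -> ip c x <= m.
Proof.
move=> [k [a [z [a_ge0 a_sum1 Sz ->]]]] S_le; rewrite ip_sumr.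
apply: (@le_trans _ _ (\sum_(i < k) a i * m)); last by rewrite -mulr_suml a_sum1 mul1r.
by apply: ler_sum => i _; rewrite ipZr ler_wpM2l // S_le.
Qed.

End InnerProduct.

Section SmallErrors.
Variable R : realFieldType.

Lemma ler_of_le_addMeps (r s K : R) :
  (forall eps, 0 < eps -> eps <= 1 -> r <= s + K * eps) -> r <= s.
Proof.
move=> h; apply/ler_addgt0Pr => e e_gt0.
have K1_gt0 : 0 < `|K| + 1 by rewrite ltr_wpDl.
pose eps := Num.min 1 (e / (`|K| + 1)).
have eps_gt0 : 0 < eps by rewrite lt_min ltr01 divr_gt0.
have eps_le1 : eps <= 1 by rewrite ge_min lexx.
have : (`|K| + 1) * eps <= e by rewrite mulrC -ler_pdivlMr // ge_min lexx orbT.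
have : K * eps <= `|K| * eps by rewrite ler_wpM2r ?ler_norm // ltW.
have := h eps eps_gt0 eps_le1; rewrite mulrDl mul1r; lra.
Qed.

Lemma le0_of_le_quadratic (r K : R) :
  (forall t, 0 < t -> t <= 1 -> 2 * t * r <= t ^+ 2 * K) -> r <= 0.
Proof.
move=> h; apply: (@ler_of_le_addMeps r 0 (K / 2)) => t t_gt0 t_le1.
by have := h t t_gt0 t_le1; rewrite expr2 add0r; nra.
Qed.

End SmallErrors.

Section Topology.
Variable R : realType.
Local Open Scope classical_set_scope.

Lemma closed_rV_approx m (A : set 'rV[R]_m) :
  (forall p : 'rV[R]_m,
     (forall e, 0 < e -> exists2 q : 'rV[R]_m, A q & forall k, `|p ord0 k - q ord0 k| < e) ->
     A p) ->
  closed A.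
Proof.
move=> hA p p_cl; apply: hA => e e_gt0.
have [q [Aq [_ /(_ ord0) pq]]] := p_cl _ (nbhsx_ballx p e e_gt0).
by exists q.
Qed.

Lemma rV_box_compact m (b : R) : compact [set v : 'rV[R]_m | forall k, `|v ord0 k| <= b].
Proof.
have -> : [set v : 'rV[R]_m | forall k, `|v ord0 k| <= b] =
          [set v | forall k, (fun=> `[- b, b]) k (v ord0 k)].
  by apply/seteqP; split => v /= h k; have := h k; rewrite /= in_itv /= ler_norml.
exact: rV_compact (fun=> @segment_compact R _ _).
Qed.

Lemma continuous_sum (T : topologicalType) I (r : seq I) (F : I -> T -> R) :
  (forall i, continuous (F i)) -> continuous (fun t => \sum_(i <- r) F i t).
Proof.
move=> F_cont; elim: r => [|i r IH].
  by under eq_fun do rewrite big_nil; exact: cst_continuous.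
under eq_fun do rewrite big_cons.
by move=> t; apply: continuousD; [exact: F_cont | exact: IH].
Qed.

End Topology.

Definition convex_comb (R : realType) (E : lmodType R) (S : E -> Prop) k
    (a : 'I_k -> R) (z : 'I_k -> E) (w : E) :=
  [/\ (forall i, 0 <= a i), \sum_(i < k) a i = 1, (forall i, S (z i)) &
      w = \sum_(i < k) a i *: z i].

Section FiniteDim.
Variables (R : realType) (E : lmodType R) (n : nat) (e : 'I_n -> E).
Hypothesis hspan : forall x : E, exists c : 'I_n -> R, x = \sum_(i < n) c i *: e i.

Lemma affine_dependence k (z : 'I_k -> E) : (n.+1 < k)%N ->
  exists b : 'I_k -> R, [/\ exists j, b j != 0, \sum_(j < k) b j = 0 &
    \sum_(j < k) b j *: z j = 0].
Proof.
move=> n_lt_k; have [c zE] := fin_all_exists (fun j => hspan (z j)).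
pose A : 'M[R]_(k, n + 1) := row_mx (\matrix_(j, i) c j i) (const_mx 1).
have /rowV0Pn[v] : kermx A != 0.
  rewrite kermx_eq0; apply/negP => /eqP rkA.
  by have := rank_leq_col A; rewrite rkA addn1 leqNgt n_lt_k.
rewrite sub_kermx => /eqP vA /matrix0Pn[i [j]]; rewrite [i]ord1 => vj.
have vA_at l : \sum_(j < k) v ord0 j * A j l = 0.
  by have := congr1 (fun M : 'rV_(n + 1) => M ord0 l) vA; rewrite !mxE.
have vc i' : \sum_(j < k) v ord0 j * c j i' = 0.
  by rewrite -[RHS](vA_at (lshift 1 i')); apply: eq_bigr => j' _; rewrite row_mxEl mxE.
exists (v ord0); split; first by exists j.
  by rewrite -[RHS](vA_at (rshift n ord0)); apply: eq_bigr => j' _; rewrite row_mxEr mxE mulr1.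
under eq_bigr do rewrite zE scaler_sumr.
rewrite exchange_big /=; apply: big1 => i' _.
by under eq_bigr do rewrite scalerA; rewrite -scaler_suml vc scale0r.
Qed.

Lemma convex_comb_shorten (S : E -> Prop) k (a : 'I_k.+1 -> R) z w :
  (n.+1 < k.+1)%N -> convex_comb S a z w ->
  exists (a' : 'I_k -> R) (z' : 'I_k -> E), convex_comb S a' z' w.
Proof.
move=> n_lt_k [a_ge0 a_sum1 Sz ->].
have [b [[j bj_neq0] b_sum0 bz0]] := affine_dependence z n_lt_k.
have [jp bjp_gt0] : exists jp, 0 < b jp.
  apply/existsP; apply: contraT => /existsPn b_le0; move: bj_neq0.
  have /psumr_eq0P/(_ j isT) : \sum_(i < k.+1) - b i = 0 by rewrite sumrN b_sum0 oppr0.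
  by move=> /(_ _)/eqP; rewrite oppr_eq0 => ->; last by move=> i _; rewrite oppr_ge0 leNgt.
(* Move along the affine dependence until the first weight [a i] vanishes. *)
have [j0 bj0_gt0 j0_min] := @arg_minP _ R _ jp (fun i => 0 < b i) (fun i => a i / b i) bjp_gt0.
set t := a j0 / b j0.
pose a' i := a i - t * b i.
have a'_ge0 i : 0 <= a' i.
  rewrite subr_ge0; have [bi_gt0|bi_le0] := ltrP 0 (b i).
    by rewrite -ler_pdivlMr //; exact: j0_min.
  by apply: le_trans (a_ge0 i); rewrite mulr_ge0_le0 // divr_ge0 // ltW.
have a'_j0 : a' j0 = 0 by rewrite /a' /t divfK ?subrr // gt_eqF.
have a'_sum1 : \sum_(i < k.+1) a' i = 1 by rewrite sumrB -mulr_sumr b_sum0 mulr0 subr0.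
have a'_comb : \sum_(i < k.+1) a i *: z i = \sum_(i < k.+1) a' i *: z i.
  under [RHS]eq_bigr do rewrite scalerBl -scalerA.
  by rewrite sumrB -scaler_sumr bz0 scaler0 subr0.
exists (a' \o lift j0), (z \o lift j0); split.
- by move=> i; exact: a'_ge0.
- by rewrite -a'_sum1 (bigD1_ord j0) //= a'_j0 add0r.
- by move=> i; exact: Sz.
- by rewrite a'_comb (bigD1_ord j0) //= a'_j0 scale0r add0r.
Qed.

Lemma caratheodory (S : E -> Prop) k (a : 'I_k -> R) z w : convex_comb S a z w ->
  exists (a' : 'I_n.+1 -> R) (z' : 'I_n.+1 -> E), convex_comb S a' z' w.
Proof.
elim: k a z w => [|k IH] a z w.
  by case=> _; rewrite big_ord0 => /eqP; rewrite eq_sym oner_eq0.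
have [k_le_n comb|n_lt_k comb] := leqP k.+1 n.+1; last first.
  by have [a' [z' comb']] := convex_comb_shorten n_lt_k comb; exact: IH comb'.
case: comb => a_ge0 a_sum1 Sz ->.
pose a' (i : 'I_n.+1) := if (i < k.+1)%N then a (inord i) else 0.
exists a', (fun i => z (inord i)); split => // [i||].
- by rewrite /a'; case: ifP.
- rewrite -big_mkcond /= -(big_ord_widen _ (fun i => a (inord i)) k_le_n) -a_sum1.
  by apply: eq_bigr => i _; rewrite inord_val.
- rewrite (eq_bigr (fun i : 'I_n.+1 => if (i < k.+1)%N then a (inord i) *: z (inord i) else 0));
    last by move=> i _; rewrite /a'; case: ifP; rewrite ?scale0r.
  rewrite -big_mkcond /= -(big_ord_widen _ (fun i => a (inord i) *: z (inord i)) k_le_n).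
  by apply: eq_bigr => i _; rewrite inord_val.
Qed.

Variable ip : E -> E -> R.
Hypothesis hip : is_inner_product ip.

Lemma orthogonal_span_eq0 w : (forall i, ip w (e i) = 0) -> w = 0.
Proof.
move=> w_perp; have [c wE] := hspan w; apply: (ipxx_le0 hip).
rewrite {2}wE ip_sumr // big1 // => i _.
by rewrite ipZr // w_perp mulr0.
Qed.

Definition gram : 'M[R]_n := \matrix_(i, k) ip (e i) (e k).

Lemma gram_coords z :
  z = \sum_(i < n) ((\row_k ip z (e k)) *m pinvmx gram) ord0 i *: e i.
Proof.
set phi := \row_k ip z (e k); set c := phi *m pinvmx gram.
have [c0 zE] := hspan z.
have phiE : phi = (\row_i c0 i) *m gram.
  apply/rowP => k; rewrite !mxE {1}zE ip_suml //.
  by apply: eq_bigr => i _; rewrite ipZl // !mxE.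
have cG : c *m gram = phi by rewrite mulmxKpV // phiE submxMl.
apply/eqP; rewrite -subr_eq0; apply/eqP/orthogonal_span_eq0 => k.
rewrite ipBl // ip_suml //.
have := congr1 (fun M : 'rV_n => M ord0 k) cG; rewrite [LHS]mxE [RHS]mxE => <-.
apply/eqP; rewrite subr_eq0; apply/eqP.
by apply: eq_bigr => i _; rewrite ipZl // [gram _ _]mxE.
Qed.

Lemma bounded_coords r : 0 <= r -> exists2 B, 0 <= B & forall z, ip z z <= r ->
  exists c : 'I_n -> R, z = \sum_(i < n) c i *: e i /\ forall i, `|c i| <= B.
Proof.
move=> r_ge0; pose P := pinvmx gram.
pose bnd i k := (r + ip (e k) (e k)) / 2 * `|P k i|.
have bnd_ge0 i k : 0 <= bnd i k by rewrite mulr_ge0 // divr_ge0 // addr_ge0 // ipxx_ge0.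
exists (\sum_(i < n) \sum_(k < n) bnd i k); first by do 2!apply: sumr_ge0 => ? _.
move=> z zz_le; exists (fun i => ((\row_k ip z (e k)) *m P) ord0 i).
split=> [|i]; first exact: gram_coords.
rewrite [X in _ <= X](bigD1 i) //= -[X in X <= _]addr0 lerD ?sumr_ge0 //; last first.
  by move=> ? _; apply: sumr_ge0.
rewrite mxE; apply: (le_trans (ler_norm_sum _ _ _)); apply: ler_sum => k _.
rewrite normrM mxE ler_wpM2r //; apply: (le_trans (normr_ip_le hip _ _)).
by rewrite ler_wpM2r ?lerD2r // invr_ge0.
Qed.

Definition gram_norm := \sum_(i < n) \sum_(k < n) `|ip (e i) (e k)|.

Lemma ip_small_coords_le (t : 'I_n -> R) eps : eps <= 1 -> (forall i, `|t i| <= eps) ->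
  ip (\sum_(i < n) t i *: e i) (\sum_(i < n) t i *: e i) <= gram_norm * eps.
Proof.
move=> eps_le1 t_le.
rewrite ip_suml // /gram_norm mulr_suml; apply: ler_sum => i _.
rewrite ipZl // ip_sumr // mulr_sumr mulr_suml; apply: ler_sum => k _.
rewrite ipZr //; apply: (le_trans (ler_norm _)).
rewrite !normrM [X in _ <= X]mulrC ler_pM ?mulr_ge0 ?t_le // ler_piMl //.
exact: le_trans (t_le k) eps_le1.
Qed.

Lemma continuous_dist2_coords (T : topologicalType) x (u : T -> 'I_n -> R) :
  (forall i, continuous (u^~ i)) ->
  continuous (fun t => ip (x - \sum_(i < n) u t i *: e i) (x - \sum_(i < n) u t i *: e i)).
Proof.
move=> u_cont.
have expand t : ip (x - \sum_(i < n) u t i *: e i) (x - \sum_(i < n) u t i *: e i) =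
    ip x x - 2 * \sum_(i < n) u t i * ip x (e i) +
    \sum_(i < n) \sum_(k < n) u t i * (u t k * ip (e i) (e k)).
  have ip_x_sum : ip x (\sum_(i < n) u t i *: e i) = \sum_(i < n) u t i * ip x (e i).
    by rewrite (ip_sumr hip); apply: eq_bigr => i _; rewrite (ipZr hip).
  have ip_sum_sum : ip (\sum_(i < n) u t i *: e i) (\sum_(i < n) u t i *: e i) =
      \sum_(i < n) \sum_(k < n) u t i * (u t k * ip (e i) (e k)).
    rewrite (ip_suml hip); apply: eq_bigr => i _; rewrite (ipZl hip) (ip_sumr hip) mulr_sumr.
    by apply: eq_bigr => k _; rewrite (ipZr hip).
  rewrite (ipBl hip) !(ipBr hip) (ipC hip _ x) ip_x_sum ip_sum_sum; lra.
under eq_fun do rewrite expand.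
have cst_mul (c : R) (f : T -> R) : continuous f -> continuous (fun t => c * f t).
  by move=> f_cont t; apply: (@continuousM R T); [exact: cst_continuous | exact: f_cont].
move=> t; apply: (@continuousD R R^o T); first apply: (@continuousB R R^o T).
- exact: cst_continuous.
- apply: cst_mul; apply: continuous_sum => i t'.
  by apply: (@continuousM R T); [exact: u_cont | exact: cst_continuous].
- apply: continuous_sum => i; apply: continuous_sum => k t'.
  apply: (@continuousM R T); first exact: u_cont.
  by apply: (@continuousM R T); [exact: u_cont | exact: cst_continuous].
Qed.

End FiniteDim.

Definition ip_closed (R : realType) (E : lmodType R) (ip : E -> E -> R) (S : E -> Prop) :=
  forall z, (forall eps, 0 < eps -> exists2 z', S z' & ip (z - z') (z - z') <= eps) -> S z.

Section NearestPoint.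
Variables (R : realType) (E : lmodType R) (ip : E -> E -> R).
Hypothesis hip : is_inner_product ip.
Variables (n : nat) (e : 'I_n -> E).
Hypothesis hspan : forall x : E, exists c : 'I_n -> R, x = \sum_(i < n) c i *: e i.
Variables (S : E -> Prop) (B : R).
Hypothesis B_ge0 : 0 <= B.
Hypothesis S_coords : forall z, S z ->
  exists c : 'I_n -> R, z = \sum_(i < n) c i *: e i /\ forall i, `|c i| <= B.
Hypothesis S_closed : ip_closed ip S.

Local Notation N := n.+1.
Local Notation M := (N + N * n)%N.
Local Open Scope classical_set_scope.

(* A parameter vector codes [N] weights followed by the coordinates of [N] points
   of [S]; by Caratheodory the resulting convex combinations exhaust [conv S]. *)
Definition pweight (p : 'rV[R]_M) (j : 'I_N) := p ord0 (lshift (N * n) j).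
Definition pcoord (p : 'rV[R]_M) (j : 'I_N) (i : 'I_n) := p ord0 (rshift N (mxvec_index j i)).
Definition ppoint p j := \sum_(i < n) pcoord p j i *: e i.
Definition pcomb p := \sum_(j < N) pweight p j *: ppoint p j.

Definition params : set 'rV[R]_M := fun p =>
  [/\ (forall j, 0 <= pweight p j), \sum_(j < N) pweight p j = 1,
      (forall j, S (ppoint p j)) & (forall j i, `|pcoord p j i| <= B)].

Lemma params_of_convex_comb k (a : 'I_k -> R) z w : convex_comb S a z w ->
  exists2 p, params p & pcomb p = w.
Proof.
move=> /(caratheodory hspan)[a' [z' [a'_ge0 a'_sum1 Sz' ->]]].
have [c cE] := fin_all_exists (fun j => S_coords (Sz' j)).
pose p : 'rV[R]_M := row_mx (\row_j a' j) (mxvec (\matrix_(j, i) c j i)).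
have pweightE j : pweight p j = a' j by rewrite /pweight row_mxEl mxE.
have pcoordE j i : pcoord p j i = c j i by rewrite /pcoord row_mxEr mxvecE mxE.
have ppointE j : ppoint p j = z' j.
  by rewrite /ppoint (proj1 (cE j)); apply: eq_bigr => i _; rewrite pcoordE.
exists p; last by apply: eq_bigr => j _; rewrite pweightE ppointE.
split=> [j||j|j i]; rewrite ?pweightE ?ppointE ?pcoordE //.
- by rewrite -a'_sum1; apply: eq_bigr => j _; rewrite pweightE.
- exact: (proj2 (cE j)).
Qed.

Lemma params_box : params `<=` [set p | forall k, `|p ord0 k| <= 1 + B].
Proof.
move=> p [w_ge0 w_sum1 _ c_le] k /=; rewrite -(splitK k).
case: (split k) => [j|l] /=.
  have : pweight p j <= 1 by rewrite -w_sum1 (bigD1 j) //= lerDl sumr_ge0.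
  by rewrite /pweight ger0_norm ?w_ge0 // => /le_trans; apply; rewrite lerDl.
case/mxvec_indexP: l => j i.
by apply: le_trans (c_le j i) _; rewrite lerDr.
Qed.

Lemma ppoint_approx_mem (p : 'rV[R]_M) j :
  (forall e, 0 < e -> exists2 q, params q & forall k, `|p ord0 k - q ord0 k| < e) ->
  S (ppoint p j).
Proof.
move=> p_approx; apply: S_closed => eps eps_gt0.
have gram_norm_ge0 : 0 <= gram_norm e ip by do 2!apply: sumr_ge0 => ? _.
pose delta := Num.min 1 (eps / (gram_norm e ip + 1)).
have delta_gt0 : 0 < delta by rewrite lt_min ltr01 divr_gt0 // ltr_wpDl.
have delta_le1 : delta <= 1 by rewrite ge_min lexx.
have delta_le : (gram_norm e ip + 1) * delta <= eps.
  by rewrite mulrC -ler_pdivlMr ?ltr_wpDl // ge_min lexx orbT.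
have [q [_ _ Sq _] pq] := p_approx _ delta_gt0.
exists (ppoint q j) => //.
have -> : ppoint p j - ppoint q j = \sum_(i < n) (pcoord p j i - pcoord q j i) *: e i.
  by rewrite -sumrB; apply: eq_bigr => i _; rewrite scalerBl.
apply: le_trans (ip_small_coords_le e hip delta_le1 _) _ => [i|].
  exact/ltW/pq.
by apply: le_trans delta_le; rewrite ler_wpM2r ?lerDl // ltW.
Qed.

Lemma params_closed : closed params.
Proof.
apply: closed_rV_approx => p p_approx.
have N_gt0 : 0 < N%:R :> R by rewrite ltr0n.
split=> [j||j|j i].
- apply/ler_addgt0Pl => eps /(p_approx eps)[q [w_ge0 _ _ _] /(_ (lshift (N * n) j))].
  by rewrite ltr_norml => /andP[+ _]; have := w_ge0 j; rewrite /pweight; lra.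
- apply/eqP; rewrite -subr_eq0 -normr_le0; apply/ler_addgt0Pl => eps eps_gt0.
  have [q [_ w_sum1 _ _] pq] := p_approx (eps / N%:R) (divr_gt0 eps_gt0 N_gt0).
  rewrite addr0 -[X in _ - X]w_sum1 -sumrB.
  apply: (le_trans (ler_norm_sum _ _ _)).
  apply: (@le_trans _ _ (\sum_(j < N) eps / N%:R)).
    by apply: ler_sum => j _; apply/ltW/pq.
  by rewrite sumr_const card_ord -(mulr_natr (eps / N%:R)) divfK ?gt_eqF.
- exact: ppoint_approx_mem.
- apply/ler_addgt0Pr => eps /(p_approx eps)[q [_ _ _ c_le] /(_ (rshift N (mxvec_index j i)))].
  move=> /ltW pq; apply: le_trans (lerD (c_le j i) pq).
  by rewrite -[X in `|X|](subrK (pcoord q j i)) addrC ler_normD.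
Qed.

Lemma pcomb_coords p :
  pcomb p = \sum_(i < n) (\sum_(j < N) pweight p j * pcoord p j i) *: e i.
Proof.
rewrite /pcomb /ppoint; under eq_bigr do rewrite scaler_sumr.
rewrite exchange_big /=; apply: eq_bigr => i _; rewrite scaler_suml.
by apply: eq_bigr => j _; rewrite scalerA.
Qed.

Variable x : E.

Let dist2 p := ip (x - pcomb p) (x - pcomb p).

Lemma exists_nearest_params : (exists z, S z) ->
  exists2 p, params p & forall q, params q -> dist2 p <= dist2 q.
Proof.
move=> [z0 Sz0].
have params_n0 : params !=set0.
  have comb0 : convex_comb S (fun _ : 'I_1 => 1) (fun=> z0) z0.
    by split => //; rewrite big_ord1 // scale1r.
  by have [p p_par _] := params_of_convex_comb comb0; exists p.
have params_compact : compact params.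
  exact: subclosed_compact params_closed (@rV_box_compact R M (1 + B)) params_box.
have dist2_cont : {within params, continuous dist2}.
  apply: continuous_subspaceT; rewrite /dist2.
  under eq_fun do rewrite pcomb_coords.
  apply: (continuous_dist2_coords hip) => i.
  apply: continuous_sum => j t.
  by apply: (@continuousM R); apply: coord_continuous.
have [p] := EVT_min_rV params_n0 params_compact dist2_cont.
rewrite inE => p_par p_min; exists p => // q q_par.
by apply: p_min; rewrite inE.
Qed.

Lemma nearest_params_ip_le0 p : params p -> (forall q, params q -> dist2 p <= dist2 q) ->
  forall z, S z -> ip (x - pcomb p) (z - pcomb p) <= 0.
Proof.
move=> p_par p_min z Sz; set d := x - pcomb p; set w := z - pcomb p.
apply: (@le0_of_le_quadratic _ _ (ip w w)) => t t_gt0 t_le1.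
(* [pcomb p + t w] is again in [conv S], being [(1 - t) pcomb p + t z]. *)
have [q q_par qE] : exists2 q, params q & pcomb q = pcomb p + t *: w.
  case: p_par => w_ge0 w_sum1 Sp _.
  pose a (i : 'I_N.+1) := if (i < N)%N then (1 - t) * pweight p (inord i) else t.
  pose zs (i : 'I_N.+1) := if (i < N)%N then ppoint p (inord i) else z.
  apply: (@params_of_convex_comb _ a zs); split.
  - move=> i; rewrite /a; case: ifP => _; last exact: ltW.
    by rewrite mulr_ge0 // subr_ge0.
  - rewrite big_ord_recr /= /a /= ltnn.
    under eq_bigr do rewrite ltn_ord inord_val.
    by rewrite -mulr_sumr w_sum1 mulr1 subrK.
  - by move=> i; rewrite /zs; case: ifP.
  - rewrite big_ord_recr /= /a /zs /= ltnn.
    under eq_bigr do rewrite ltn_ord inord_val -scalerA.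
    rewrite -scaler_sumr -/(pcomb p) /w scalerBr scalerBl scale1r.
    by rewrite addrA addrAC.
have := p_min q q_par; rewrite /dist2 qE -/d.
have -> : x - (pcomb p + t *: w) = d - t *: w by rewrite /d opprD addrA.
clearbody d w; rewrite !(ipBl hip, ipBr hip, ipZl hip, ipZr hip) expr2 (ipC hip w d).
lra.
Qed.

Lemma conv_of_ip_le_coords : (forall c, exists2 z, S z & ip c x <= ip c z) -> conv S x.
Proof.
move=> x_le.
have [p p_par p_min] : exists2 p, params p & forall q, params q -> dist2 p <= dist2 q.
  by apply: exists_nearest_params; have [z0 Sz0 _] := x_le 0; exists z0.
set d := x - pcomb p.
have [z Sz dx_le] := x_le d.
have := nearest_params_ip_le0 p_par p_min Sz.
rewrite -/d (ipBr hip) => dz_le.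
have /eqP : d = 0 by apply: (ipxx_le0 hip); rewrite {2}/d (ipBr hip); lra.
rewrite subr_eq0 => /eqP ->.
by case: p_par => w_ge0 w_sum1 Sp _; exists N, (pweight p), (ppoint p).
Qed.

End NearestPoint.

Lemma conv_of_ip_le (R : realType) (E : lmodType R) (ip : E -> E -> R) (S : E -> Prop) r :
  is_inner_product ip -> finite_dim E -> (forall z, S z -> ip z z <= r) -> ip_closed ip S ->
  forall x, (forall c, exists2 z, S z & ip c x <= ip c z) -> conv S x.
Proof.
move=> hip [n [e hspan]] S_le S_closed x x_le.
have [z0 Sz0 _] := x_le 0.
have r_ge0 : 0 <= r by apply: le_trans (S_le z0 Sz0); exact: ipxx_ge0.
have [B B_ge0 B_coords] := bounded_coords hspan hip r_ge0.
apply: (conv_of_ip_le_coords hip hspan B_ge0 _ S_closed x_le) => z /S_le.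
exact: B_coords.
Qed.

Section FTvN.
Variables (R : realType) (V W : lmodType R) (ipV : V -> V -> R) (ipW : W -> W -> R).
Variable lam : V -> W.
Hypothesis hlam : FTvN ipV ipW lam.

Lemma ftvn_ipxx x : ipW (lam x) (lam x) = ipV x x.
Proof.
case: hlam => hV hW lam_norm _ _; have := congr1 (fun t => t ^+ 2) (lam_norm x).
by rewrite /ipnorm !sqr_sqrtr // ipxx_ge0.
Qed.

Lemma ftvn_ip_le x y : ipV x y <= ipW (lam x) (lam y).
Proof. by case: hlam. Qed.

Lemma ftvn_ip_attained c q : (exists z, lam z = q) ->
  exists x, lam x = q /\ ipV c x = ipW (lam c) (lam x).
Proof. by case: hlam => _ _ _ _; apply. Qed.

Lemma ftvn_dist2_le a b : ipW (lam a - lam b) (lam a - lam b) <= ipV (a - b) (a - b).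
Proof.
case: hlam => hV hW _ _ _.
rewrite !(ipBl hW, ipBr hW, ipBl hV, ipBr hV) !ftvn_ipxx (ipC hW (lam b)) (ipC hV b).
by have := ftvn_ip_le a b; lra.
Qed.

Lemma ftvn_fibre_closed y : ip_closed ipV (fun z => lam z = lam y).
Proof.
case: hlam => _ hW _ _ _ z z_approx; apply/eqP; rewrite -subr_eq0; apply/eqP/(ipxx_le0 hW).
apply/ler_addgt0Pr => eps /z_approx[z' <- zz'_le]; rewrite add0r.
exact: le_trans (ftvn_dist2_le z z') zz'_le.
Qed.

Lemma majV_of_ip_le x y : finite_dim V ->
  (forall c, ipV c x <= ipW (lam c) (lam y)) -> majV lam x y.
Proof.
case: hlam => hV _ _ _ _ fdV x_le.
apply: (conv_of_ip_le (r := ipV y y) hV fdV _ (@ftvn_fibre_closed y)).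
  by move=> z lam_z; rewrite -!ftvn_ipxx lam_z.
move=> c; have [z [lam_z ip_cz]] := ftvn_ip_attained c (ex_intro _ y erefl).
by exists z => //; rewrite ip_cz lam_z.
Qed.

Lemma ip_le_of_majV x y : majV lam x y -> forall c, ipV c x <= ipW (lam c) (lam y).
Proof.
case: hlam => hV _ _ _ _ xy c; apply: (ip_conv_le hV xy) => z <-.
exact: ftvn_ip_le.
Qed.

End FTvN.

Section ReducedSystem.
Variables (R : realType) (V W : lmodType R) (ipV : V -> V -> R) (ipW : W -> W -> R).
Variables (lam : V -> W) (mu : W -> W).
Hypotheses (hlam : FTvN ipV ipW lam) (hmu : FTvN ipW ipW mu).
Hypothesis mu_lam : forall x, mu (lam x) = lam x.
Hypothesis mu_ran : forall w, exists x, mu w = lam x.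
Hypothesis fdW : finite_dim W.

Let hV : is_inner_product ipV. Proof. by case: hlam. Qed.
Let hW : is_inner_product ipW. Proof. by case: hlam. Qed.

Lemma majW_lam_of_ip_le t u :
  (forall x, ipW (lam x) (lam t) <= ipW (lam x) (mu u)) -> majW mu (lam t) u.
Proof.
move=> t_le; apply: (majV_of_ip_le hmu fdW) => c.
have [x mu_c] := mu_ran c.
have := ftvn_ip_le hmu c (lam t); rewrite mu_lam mu_c => /le_trans; apply.
exact: t_le.
Qed.

Lemma majW_of_dual_cone u v : (exists xu, lam xu = u) -> (exists xv, lam xv = v) ->
  (forall f, (exists xf, lam xf = f) -> 0 <= ipW (u - v) f) -> majW mu v u.
Proof.
move=> [xu <-] [xv <-] uv_ge0; apply: majW_lam_of_ip_le => x.
have := uv_ge0 _ (ex_intro _ x erefl).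
by rewrite mu_lam (ipBl hW) subr_ge0 !(ipC hW _ (lam x)).
Qed.

Lemma majW_lam_sum k (x : 'I_k -> V) :
  majW mu (lam (\sum_(i < k) x i)) (\sum_(i < k) lam (x i)).
Proof.
apply: majW_lam_of_ip_le => y.
have [y' [lam_y' ip_y']] := ftvn_ip_attained hlam (\sum_(i < k) x i) (ex_intro _ y erefl).
rewrite (ipC hW) -lam_y' -ip_y' (ip_suml hV) [X in _ <= X](ipC hW).
have := ftvn_ip_le hmu (\sum_(i < k) lam (x i)) (lam y'); rewrite mu_lam; apply: le_trans.
by rewrite (ip_suml hW); apply: ler_sum => i _; exact: ftvn_ip_le hlam _ _.
Qed.

Lemma majW_lam_of_majV x y : majV lam x y -> majW mu (lam x) (lam y).
Proof.
move=> xy; apply: majW_lam_of_ip_le => z.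
have [z' [lam_z' ip_z']] := ftvn_ip_attained hlam x (ex_intro _ z erefl).
rewrite mu_lam (ipC hW) -lam_z' -ip_z' (ipC hV).
exact: (ip_le_of_majV hlam xy z').
Qed.

Lemma majV_of_majW_lam x y : finite_dim V -> majW mu (lam x) (lam y) -> majV lam x y.
Proof.
move=> fdV xy; apply: (majV_of_ip_le hlam fdV) => c.
apply: le_trans (ftvn_ip_le hlam c x) _.
by have := ip_le_of_majV hmu xy (lam c); rewrite !mu_lam.
Qed.

End ReducedSystem.

Theorem theorem10p3 (R : realType) (V W : lmodType R)
    (ipV : V -> V -> R) (ipW : W -> W -> R) (lam : V -> W) (mu : W -> W) :
  reduced_system ipV ipW lam mu ->
  finite_dim W ->
  (* (a) *)
  (forall u v : W, (exists xu, lam xu = u) -> (exists xv, lam xv = v) ->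
     (forall f : W, (exists xf, lam xf = f) -> 0 <= ipW (u - v) f) ->
     majW mu v u) /\
  (* (b) *)
  (forall (k : nat) (x : 'I_k -> V),
     majW mu (lam (\sum_(i < k) x i)) (\sum_(i < k) lam (x i))) /\
  (* (c) *)
  (forall x y : V, majV lam x y -> majW mu (lam x) (lam y)) /\
  (finite_dim V ->
     forall x y : V, majW mu (lam x) (lam y) -> majV lam x y).
Proof.
case=> hlam hmu mu_lam mu_ran fdW.
split; first exact: majW_of_dual_cone hlam hmu mu_lam mu_ran fdW.
split; first exact: majW_lam_sum hlam hmu mu_lam mu_ran fdW.
split; first exact: majW_lam_of_majV hlam hmu mu_lam mu_ran fdW.
move=> fdV x y; exact: (majV_of_majW_lam hlam hmu mu_lam fdV).
Qed.
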